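(* Let $v\ge2$, $\epsilon>0$, and let $0\le k_1<k_2\le v$ be integers with $(k_1,k_2)\neq(0,v)$. Then $L(v,k_1,\epsilon)\le L(v,k_2,\epsilon)$ if and only if $e^\epsilon\ge E(k_1,k_2;v)$.
   Context: For $1\le k\le v-1$, $L(v,k,\epsilon)=\frac{(ke^\epsilon+v-k)^2}{k(v-k)}$, and $L(v,0,\epsilon)=L(v,v,\epsilon)=\infty$. For $0\le k_1<k_2\le v$ with $(k_1,k_2)\neq(0,v)$: $E(k_1,k_2;v)=\sqrt{\frac{(v-k_1)(v-k_2)}{k_1k_2}}$ if $k_1\ge1$ (so $E(k_1,v;v)=0$), and $E(0,k_2;v)=\infty$. *)

From Stdlib Require Import Reals.
From Coquelicot Require Import Rbar.
Open Scope R_scope.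

Definition L (v k : nat) (eps : R) : Rbar :=
  if (Nat.eqb k 0 || Nat.eqb k v)%bool then p_infty
  else Finite ((INR k * exp eps + INR v - INR k) ^ 2 / (INR k * (INR v - INR k))).

Definition E (k1 k2 v : nat) : Rbar :=
  if Nat.eqb k1 0 then p_infty
  else Finite (sqrt ((INR v - INR k1) * (INR v - INR k2) / (INR k1 * INR k2))).

(* Clearing denominators, L(v,k2) - L(v,k1) is a positive multiple of
   e^(2 eps) k1 k2 - (v-k1)(v-k2), so for 0 < k1 < k2 < v the inequality
   L(v,k1) <= L(v,k2) says exactly e^eps >= E(k1,k2;v).  At the boundary,
   k1 = 0 makes both sides false (L(v,0) = E(0,k2;v) = +oo while L(v,k2) is
   finite), and k2 = v makes both true (L(v,v) = +oo and E(k1,v;v) = 0). *)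
From Stdlib Require Import Reals Lra Lia.
From Coquelicot Require Import Rcomplements Rbar.
Open Scope R_scope.

Lemma sqrt_le_iff (x a : R) : 0 <= x -> 0 <= a -> (sqrt x <= a <-> x <= a * a).
Proof.
  intros Hx Ha; rewrite <- (sqrt_square a Ha) at 1; split.
  - apply sqrt_le_0; nra.
  - apply sqrt_le_1; nra.
Qed.

Definition L_real (v k a : R) : R := (k * a + v - k) ^ 2 / (k * (v - k)).

Lemma L_real_sub (v k1 k2 a : R) : 0 < k1 < v -> 0 < k2 < v ->
  L_real v k2 a - L_real v k1 a =
  v * (k2 - k1) / (k1 * k2 * (v - k1) * (v - k2))
  * (a * a * (k1 * k2) - (v - k1) * (v - k2)).
Proof. intros; unfold L_real; field; lra. Qed.

Lemma L_real_le_iff (v k1 k2 a : R) : 0 < k1 -> k1 < k2 -> k2 < v ->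
  (L_real v k1 a <= L_real v k2 a <-> (v - k1) * (v - k2) <= a * a * (k1 * k2)).
Proof.
  intros H1 H12 H2.
  set (c := v * (k2 - k1) / (k1 * k2 * (v - k1) * (v - k2))).
  assert (Hc : 0 < c).
  { unfold c, Rdiv; apply Rmult_lt_0_compat.
    - nra.
    - apply Rinv_0_lt_compat; repeat apply Rmult_lt_0_compat; lra. }
  pose proof (L_real_sub v k1 k2 a) as Hsub; fold c in Hsub.
  split; intro H; nra.
Qed.

Lemma L_real_le_iff_sqrt (v k1 k2 a : R) : 0 < k1 -> k1 < k2 -> k2 < v -> 0 <= a ->
  (L_real v k1 a <= L_real v k2 a <-> sqrt ((v - k1) * (v - k2) / (k1 * k2)) <= a).
Proof.
  intros H1 H12 H2 Ha.
  rewrite L_real_le_iff, sqrt_le_iff, Rle_div_l by (auto; try apply Rle_mult_inv_pos; nra).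
  reflexivity.
Qed.

Lemma L_interior (v k : nat) (eps : R) : k <> 0%nat -> k <> v ->
  L v k eps = Finite (L_real (INR v) (INR k) (exp eps)).
Proof.
  intros Hk0 Hkv; unfold L, L_real.
  destruct (Nat.eqb_spec k 0), (Nat.eqb_spec k v); easy.
Qed.

Lemma L_diag (v : nat) (eps : R) : L v v eps = p_infty.
Proof. unfold L; now rewrite Nat.eqb_refl, Bool.orb_true_r. Qed.

Lemma E_diag (k v : nat) : k <> 0%nat -> E k v v = Finite 0.
Proof.
  intro Hk; unfold E; destruct (Nat.eqb_spec k 0) as [|_]; [easy|].
  now rewrite Rminus_diag, Rmult_0_r, Rdiv_0_l, sqrt_0.
Qed.

Lemma E_interior (k1 k2 v : nat) : k1 <> 0%nat ->
  E k1 k2 v = Finite (sqrt ((INR v - INR k1) * (INR v - INR k2) / (INR k1 * INR k2))).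
Proof. intro Hk; unfold E; now destruct (Nat.eqb_spec k1 0). Qed.

Theorem lemma2 (v k1 k2 : nat) (eps : R) :
  (2 <= v)%nat -> 0 < eps -> (k1 < k2)%nat -> (k2 <= v)%nat ->
  ~ (k1 = 0%nat /\ k2 = v) ->
  (Rbar_le (L v k1 eps) (L v k2 eps) <-> Rbar_le (E k1 k2 v) (Finite (exp eps))).
Proof.
  intros _ _ H12 H2v Hcorner.
  destruct (Nat.eq_dec k1 0) as [->|Hk1].
  - assert (Hk2 : k2 <> v) by tauto.
    rewrite (L_interior v k2) by lia; simpl; tauto.
  - destruct (Nat.eq_dec k2 v) as [->|Hk2].
    + rewrite (L_interior v k1), L_diag, E_diag by lia; simpl.
      split; intros _; [apply Rlt_le, exp_pos | exact I].
    + rewrite !L_interior, E_interior by lia; simpl.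
      apply L_real_le_iff_sqrt; [apply lt_0_INR | apply lt_INR | apply lt_INR | apply Rlt_le, exp_pos]; lia.
Qed.
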